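(* Let $n\ge1$ and $\vec p,\vec q\in[0,1]^n$ satisfy $p_i\ge q_i$ for all $i\in\{1,\dots,n\}$. Let $S_{\vec p}$ be a sum of $n$ independent random variables $X_i\sim\mathrm{Ber}(p_i)$, and similarly $S_{\vec q}$. Define $\Delta=\sum_{i=1}^n|p_i-q_i|$, $\sigma_{\vec p}^2=\sum_{i=1}^n p_i(1-p_i)$ and $\Phi(\vec p,\vec q)=\min\big(1,\Delta/\sqrt{\sigma_{\vec p}^2+1}\big)$. Then $$\mathrm{TV}(S_{\vec p},S_{\vec q})\ge\frac1{12}\,\Phi(\vec p,\vec q).$$
   Context: $\mathrm{TV}$ is the total variation distance, $\mathrm{TV}(P,Q)=\frac12\sum_\omega|P(\omega)-Q(\omega)|$, applied to the laws of the random variables. *)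

From HB Require Import structures.
From mathcomp Require Import all_boot all_order all_algebra.
From mathcomp Require Import reals.
Set Implicit Arguments. Unset Strict Implicit. Unset Printing Implicit Defensive.
Import Order.TTheory GRing.Theory Num.Theory.
Local Open Scope ring_scope.

Definition bern_weight (R : realType) (n : nat) (p : 'I_n -> R)
  (x : {ffun 'I_n -> bool}) : R :=
  \prod_(i < n) (if x i then p i else 1 - p i).

Definition pb_pmf (R : realType) (n : nat) (p : 'I_n -> R) (k : nat) : R :=
  \sum_(x : {ffun 'I_n -> bool} | (\sum_(i < n) (x i : nat))%N == k) bern_weight p x.

(* Total variation distance between the laws of S_p and S_q
   (both supported on {0,...,n}). *)
Definition TV_pb (R : realType) (n : nat) (p q : 'I_n -> R) : R :=
  2^-1 * \sum_(k < n.+1) `|pb_pmf p k - pb_pmf q k|.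

Definition Delta (R : realType) (n : nat) (p q : 'I_n -> R) : R :=
  \sum_(i < n) `|p i - q i|.

Definition sigma2 (R : realType) (n : nat) (p : 'I_n -> R) : R :=
  \sum_(i < n) p i * (1 - p i).

Definition Phi (R : realType) (n : nat) (p q : 'I_n -> R) : R :=
  Num.min 1 (Delta p q / Num.sqrt (sigma2 p + 1)).

(* Test-function argument.  For |f| <= B one has E f(S_p) - E f(S_q) <= 2 B TV.
   Switching the p_i to the q_i one trial at a time writes this difference as
   sum_j (p_j - q_j) E[f(Z_j + 1) - f(Z_j)] for Poisson binomial hybrids Z_j.
   Take for f the identity clamped at height r + 1/2 with r = 3 M,
   M = max(Delta, sqrt(sigma_p^2 + 1)), centred between the two means: its
   increment at k is at least 1 - ((k - c) / r)^2, and the second moment of every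
   hybrid about c is at most 2 M^2, so each increment has mean >= 7/9.  Hence
   7/9 Delta <= 2 (3 M + 1/2) TV <= 7 M TV, i.e. TV >= Delta / (9 M) >= Phi / 9. *)

From HB Require Import structures.
From mathcomp Require Import all_boot all_order all_algebra.
From mathcomp Require Import reals ring lra.
Import Order.TTheory GRing.Theory Num.Theory.
Set Implicit Arguments. Unset Strict Implicit. Unset Printing Implicit Defensive.
Local Open Scope ring_scope.

Definition successes n (x : {ffun 'I_n -> bool}) : nat := (\sum_(i < n) (x i : nat))%N.

Definition fwd_diff (V : zmodType) (g : nat -> V) (k : nat) : V := g k.+1 - g k.

Section PoissonBinomialExpectation.
Variables (R : realType) (n : nat).
Implicit Types (a b : 'I_n -> R) (g h : nat -> R) (x : {ffun 'I_n -> bool}).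

Definition pb_expect g a : R := \sum_x bern_weight a x * g (successes x).

Definition set_coord a (j : 'I_n) (v : R) : 'I_n -> R :=
  fun i => if i == j then v else a i.

Definition flip_coord (j : 'I_n) x : {ffun 'I_n -> bool} :=
  [ffun i => if i == j then ~~ x i else x i].

Definition mix a b (m : nat) : 'I_n -> R := fun i => if (i < m)%N then a i else b i.

Lemma eq_pb_expect g a a' : a =1 a' -> pb_expect g a = pb_expect g a'.
Proof.
by move=> eq_a; apply: eq_bigr => x _; congr (_ * _); apply: eq_bigr => i _; rewrite eq_a.
Qed.

Lemma eq_pb_expect_fun g h a : g =1 h -> pb_expect g a = pb_expect h a.
Proof. by move=> eq_g; apply: eq_bigr => x _; rewrite eq_g. Qed.

Lemma bern_weight_ge0 a x : (forall i, 0 <= a i <= 1) -> 0 <= bern_weight a x.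
Proof.
move=> a01; apply: prodr_ge0 => i _; have /andP[a0 a1] := a01 i.
by case: (x i); rewrite ?subr_ge0.
Qed.

Lemma bern_weight_sum a : \sum_x bern_weight a x = 1.
Proof.
rewrite /bern_weight -(bigA_distr_bigA (fun i (b : bool) => if b then a i else 1 - a i)).
by apply: big1 => i _; rewrite big_bool /= addrC subrK.
Qed.

Lemma bern_weight_coord a x j : bern_weight a x =
  (if x j then a j else 1 - a j) * \prod_(i < n | i != j) (if x i then a i else 1 - a i).
Proof. exact: bigD1. Qed.

Lemma pb_expect_affine al be g a :
  pb_expect (fun k => al + be * g k) a = al + be * pb_expect g a.
Proof.
rewrite /pb_expect mulr_sumr; under eq_bigr do rewrite mulrDr mulrCA.
by rewrite big_split /= -mulr_suml bern_weight_sum mul1r.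
Qed.

Lemma pb_expectB g h a :
  pb_expect (fun k => g k - h k) a = pb_expect g a - pb_expect h a.
Proof. by rewrite /pb_expect -sumrB; apply: eq_bigr => x _; rewrite mulrBr. Qed.

Lemma ler_pb_expect g h a : (forall i, 0 <= a i <= 1) -> (forall k, g k <= h k) ->
  pb_expect g a <= pb_expect h a.
Proof.
by move=> a01 le_gh; apply: ler_sum => x _; rewrite ler_wpM2l ?bern_weight_ge0.
Qed.

Lemma pb_expect0 g : pb_expect g (fun _ => 0) = g 0%N.
Proof.
rewrite /pb_expect (bigD1 [ffun => false]) //= big1 ?addr0 => [|x x_neq0].
  rewrite /successes big1 => [|i _]; last by rewrite ffunE.
  by rewrite /bern_weight big1 ?mul1r // => i _; rewrite ffunE subr0.
have [i xi] : exists i, x i.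
  apply/existsP; apply: contraNT x_neq0 => /existsPn x_false.
  by apply/eqP/ffunP => i; rewrite ffunE; exact/negbTE/x_false.
by rewrite /bern_weight (bigD1 i) //= xi !mul0r.
Qed.

Lemma pb_expect_split_coord g a j : pb_expect g a =
  a j * pb_expect g (set_coord a j 1) + (1 - a j) * pb_expect g (set_coord a j 0).
Proof.
rewrite /pb_expect !mulr_sumr -big_split /=; apply: eq_bigr => x _.
rewrite !(bern_weight_coord _ _ j) /set_coord eqxx.
have off_j v : \prod_(i < n | i != j) (if x i then (if i == j then v else a i)
     else 1 - (if i == j then v else a i)) =
     \prod_(i < n | i != j) (if x i then a i else 1 - a i).
  by apply: eq_bigr => i /negbTE ->.
by rewrite !off_j; case: (x j); ring.
Qed.

Lemma flip_coordK j : involutive (flip_coord j).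
Proof. by move=> x; apply/ffunP => i; rewrite !ffunE; case: (i == j); rewrite ?negbK. Qed.

Lemma successes_flip_coord j x : ~~ x j -> successes (flip_coord j x) = (successes x).+1.
Proof.
move=> /negbTE xj; rewrite /successes (bigD1 j) //= [in RHS](bigD1 j) //= ffunE eqxx xj.
by congr _.+1; apply: eq_bigr => i /negbTE i_neq_j; rewrite ffunE i_neq_j.
Qed.

Lemma pb_expect_set1 g a j :
  pb_expect g (set_coord a j 1) = pb_expect (fun k => g k.+1) (set_coord a j 0).
Proof.
rewrite /pb_expect (reindex_inj (inv_inj (flip_coordK j))) /=.
apply: eq_bigr => x _; rewrite !(bern_weight_coord _ _ j) /set_coord eqxx ffunE eqxx.
have off_j : \prod_(i < n | i != j) (if flip_coord j x i then (if i == j then 1 else a i)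
   else 1 - (if i == j then 1 else a i)) =
   \prod_(i < n | i != j) (if x i then (if i == j then 0 else a i)
   else 1 - (if i == j then 0 else a i)).
  by apply: eq_bigr => i /negbTE i_neq_j; rewrite ffunE i_neq_j.
case xj: (x j) => /=; first by rewrite subrr !mul0r.
by rewrite off_j successes_flip_coord ?xj // subr0.
Qed.

Lemma pb_expect_coord g a j : pb_expect g a =
  pb_expect g (set_coord a j 0) + a j * pb_expect (fwd_diff g) (set_coord a j 0).
Proof. by rewrite (pb_expect_split_coord g a j) pb_expect_set1 pb_expectB; ring. Qed.

Lemma pb_expect_telescope g a b : pb_expect g a - pb_expect g b =
  \sum_(j < n) (a j - b j) * pb_expect (fwd_diff g) (set_coord (mix a b j) j 0).
Proof.
have mix_n : pb_expect g a = pb_expect g (mix a b n).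
  by apply: eq_pb_expect => i; rewrite /mix ltn_ord.
have mix_0 : pb_expect g b = pb_expect g (mix a b 0).
  by apply: eq_pb_expect => i; rewrite /mix ltn0.
rewrite mix_n mix_0 -(telescope_sumr (fun m => pb_expect g (mix a b m)) (leq0n n)) big_mkord.
apply: eq_bigr => j _.
have set_mix v : set_coord (mix a b j.+1) j v =1 set_coord (mix a b j) j v.
  move=> i; rewrite /set_coord /mix; have [//|i_neq_j] := eqVneq i j.
  have /negbTE i_neq_j' : (i : nat) != j by [].
  by rewrite ltnS leq_eqVlt i_neq_j'.
rewrite (pb_expect_coord g _ j) [pb_expect g (mix a b j)](pb_expect_coord g _ j).
by rewrite !(eq_pb_expect _ (set_mix _)) /mix ltnSn ltnn; ring.
Qed.

Lemma pb_expect_cst c a : pb_expect (fun _ => c) a = c.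
Proof. by rewrite /pb_expect -mulr_suml bern_weight_sum mul1r. Qed.

Lemma pb_expect_mean a : pb_expect (fun k => k%:R) a = \sum_i a i.
Proof.
have := pb_expect_telescope (fun k => k%:R) a (fun _ => 0).
rewrite pb_expect0 subr0 => ->; apply: eq_bigr => j _.
rewrite (eq_pb_expect_fun _ (h := fun _ => 1)) ?pb_expect_cst ?subr0 ?mulr1 // => k.
by rewrite /fwd_diff -[k.+1%:R]natr1 addrAC subrr add0r.
Qed.

Definition partial_sum a (m : nat) : R := \sum_(i < n | (i < m)%N) a i.

Lemma partial_sumS a (j : 'I_n) : partial_sum a j.+1 = partial_sum a j + a j.
Proof.
rewrite /partial_sum (bigD1 j) //= addrC; congr (_ + _); apply: eq_bigl => i.
by rewrite ltnS leq_eqVlt val_eqE andb_orl andbN; case: eqVneq => [->|]; rewrite ?ltnn ?andbT.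
Qed.

Lemma sqr_sum_partial a :
  (\sum_i a i) ^+ 2 = \sum_(j < n) a j * (2 * partial_sum a j + a j).
Proof.
have sum_a : \sum_i a i = partial_sum a n by apply: eq_bigl => i; rewrite ltn_ord.
have sum0 : partial_sum a 0 = 0 by apply: big_pred0 => i; rewrite ltn0.
rewrite sum_a (_ : partial_sum a n ^+ 2 = partial_sum a n ^+ 2 - partial_sum a 0 ^+ 2);
  last by rewrite sum0 expr0n subr0.
rewrite -(telescope_sumr (fun m => partial_sum a m ^+ 2) (leq0n n)) big_mkord.
by apply: eq_bigr => j _; rewrite partial_sumS; ring.
Qed.

Lemma sum_set_mix0 a (j : 'I_n) :
  \sum_i set_coord (mix a (fun _ => 0) j) j 0 i = partial_sum a j.
Proof.
rewrite /partial_sum [RHS]big_mkcond; apply: eq_bigr => i _; rewrite /set_coord /mix.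
by have [->|] := eqVneq i j; rewrite ?ltnn.
Qed.

Lemma pb_expect_sqr a c : pb_expect (fun k => (k%:R - c) ^+ 2) a =
  sigma2 a + (\sum_i a i - c) ^+ 2.
Proof.
have := pb_expect_telescope (fun k => (k%:R - c) ^+ 2) a (fun _ => 0).
rewrite pb_expect0 => /eqP; rewrite subr_eq => /eqP ->.
have step (j : 'I_n) : pb_expect (fwd_diff (fun k => (k%:R - c) ^+ 2))
    (set_coord (mix a (fun _ => 0) j) j 0) = 1 - 2 * c + 2 * partial_sum a j.
  rewrite (eq_pb_expect_fun _ (h := fun k => (1 - 2 * c) + 2 * k%:R)); last first.
    by move=> k; rewrite /fwd_diff -[k.+1%:R]natr1; ring.
  by rewrite pb_expect_affine pb_expect_mean sum_set_mix0.
under eq_bigr do rewrite step.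
rewrite (_ : (\sum_i a i - c) ^+ 2 = (\sum_i a i) ^+ 2 - \sum_i 2 * c * a i + c ^+ 2);
  last by rewrite -mulr_sumr; ring.
rewrite sqr_sum_partial /sigma2 !addrA -big_split -sumrB /= sub0r sqrrN.
by congr (_ + _); apply: eq_bigr => i _; ring.
Qed.

Lemma successes_le x : (successes x <= n)%N.
Proof.
by rewrite -[X in (_ <= X)%N]card_ord -sum1_card; apply: leq_sum => i _; exact: leq_b1.
Qed.

Lemma pb_expect_pmf g a : \sum_(k < n.+1) pb_pmf a k * g k = pb_expect g a.
Proof.
rewrite /pb_pmf; under eq_bigr do rewrite mulr_suml big_mkcond /=.
rewrite exchange_big /=; apply: eq_bigr => x _.
have lt_succ : (successes x < n.+1)%N by rewrite ltnS successes_le.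
rewrite (bigD1 (Ordinal lt_succ)) //= eqxx big1 ?addr0 // => k k_neq.
by rewrite ifF //; apply: contraNF k_neq => /eqP succ_k; apply/eqP/val_inj/esym.
Qed.

Lemma pb_expect_sub_le_TV g B a b : (forall k, `|g k| <= B) ->
  pb_expect g a - pb_expect g b <= 2 * B * TV_pb a b.
Proof.
move=> g_le_B; rewrite -!pb_expect_pmf -sumrB.
rewrite (_ : 2 * B * TV_pb a b = \sum_(k < n.+1) B * `|pb_pmf a k - pb_pmf b k|);
  last by rewrite /TV_pb -mulr_sumr; field.
apply: ler_sum => k _; rewrite -mulrBl (le_trans (ler_norm _)) //.
by rewrite normrM mulrC ler_wpM2r.
Qed.

End PoissonBinomialExpectation.

Section Clamp.
Variable R : realFieldType.
Implicit Types L r c t x y : R.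

Definition clamp L x : R := Num.max (- L) (Num.min L x).

Lemma clamp_id L x : - L <= x <= L -> clamp L x = x.
Proof. by move=> /andP[Lx xL]; rewrite /clamp min_r // max_r. Qed.

Lemma clamp_norm_le L x : 0 <= L -> `|clamp L x| <= L.
Proof.
move=> L0; rewrite ler_norml le_max lexx ge_max ge_min lexx /=.
by rewrite -subr_ge0 opprK addr_ge0.
Qed.

Lemma clamp_le_homo L : {homo clamp L : x y / x <= y}.
Proof. by move=> x y xy; rewrite le_max2 // le_min2. Qed.

(* For |t| < r both arguments lie in the linear range, so the increment is 1;
   otherwise the left side is non-positive. *)
Lemma clamp_step_ge r t : 0 < r ->
  1 - (t / r) ^+ 2 <= clamp (r + 2^-1) (t + 2^-1) - clamp (r + 2^-1) (t - 2^-1).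
Proof.
move=> r_gt0; have [u ->] : exists u, t = u * r by exists (t / r); rewrite divfK // gt_eqF.
rewrite mulfK ?gt_eqF //.
have step_ge0 : 0 <= clamp (r + 2^-1) (u * r + 2^-1) - clamp (r + 2^-1) (u * r - 2^-1).
  by rewrite subr_ge0 clamp_le_homo // lerD2l; lra.
have [u_lt1 | u_ge1] := ltP `|u| 1.
  move: u_lt1; rewrite ltr_norml => /andP[u_gtN1 u_lt1].
  have ur_gtNr : - r < u * r by nra.
  have ur_ltr : u * r < r by nra.
  by rewrite !clamp_id; [nra | apply/andP; split; lra ..].
have : 1 <= u ^+ 2 by rewrite -real_normK ?num_real // exprn_ege1.
lra.
Qed.

Definition ramp r c (k : nat) : R := clamp (r + 2^-1) (k%:R - 2^-1 - c).

Lemma ramp_norm_le r c k : 0 <= r -> `|ramp r c k| <= r + 2^-1.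
Proof. by move=> r_ge0; apply: clamp_norm_le; lra. Qed.

Lemma ramp_step_ge r c k : 0 < r -> 1 - ((k%:R - c) / r) ^+ 2 <= fwd_diff (ramp r c) k.
Proof.
move=> r_gt0; rewrite /fwd_diff /ramp -[k.+1%:R]natr1.
have -> : k%:R + 1 - 2^-1 - c = (k%:R - c) + 2^-1 :> R by field.
have -> : k%:R - 2^-1 - c = (k%:R - c) - 2^-1 :> R by ring.
exact: clamp_step_ge.
Qed.

End Clamp.

Section Arithmetic.
Variable R : rcfType.

Lemma min1_div_le_div_max (D s : R) : 0 <= D -> 0 < s ->
  Num.min 1 (D / s) <= D / Num.max D s.
Proof.
move=> D_ge0 s_gt0; have [D_le_s | s_lt_D] := leP D s.
  by rewrite ge_min lexx orbT.
by rewrite divff ?ge_min ?lexx // gt_eqF // (lt_trans s_gt0).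
Qed.

Lemma sqrtrD1_ge1 (v : R) : 0 <= v -> 1 <= Num.sqrt (v + 1).
Proof. by move=> v_ge0; rewrite -{1}sqrtr1 ler_sqrt; lra. Qed.

(* With s^2 = v + 1 and M = max D s >= 1, the left side is at most
   5/4 M^2 + 3/2 M - 3/4 = 2 M^2 - 3/4 (M - 1)^2. *)
Lemma moment_le_sqr_max (v D : R) : 0 <= v -> 0 <= D ->
  v + D + ((D + 1) / 2) ^+ 2 <= 2 * Num.max D (Num.sqrt (v + 1)) ^+ 2.
Proof.
move=> v_ge0 D_ge0; set s := Num.sqrt (v + 1); set M := Num.max D s.
have s2 : s ^+ 2 = v + 1 by rewrite sqr_sqrtr // addr_ge0.
have s_ge0 : 0 <= s := sqrtr_ge0 _.
have D_le_M : D <= M by rewrite le_max lexx.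
have s_le_M : s <= M by rewrite le_max lexx orbT.
have : s ^+ 2 <= M ^+ 2 by rewrite ler_sqr ?nnegrE //; lra.
have : D ^+ 2 <= M ^+ 2 by rewrite ler_sqr ?nnegrE //; lra.
have := sqrtrD1_ge1 v_ge0.
nra.
Qed.

End Arithmetic.

Section RampGap.
Variables (R : realType) (n : nat).

Lemma pb_expect_ramp_step_ge (r c : R) (a : 'I_n -> R) :
  (forall i, 0 <= a i <= 1) -> 0 < r ->
  1 - (sigma2 a + (\sum_i a i - c) ^+ 2) / r ^+ 2 <= pb_expect (fwd_diff (ramp r c)) a.
Proof.
move=> a01 r_gt0; rewrite -pb_expect_sqr.
rewrite (_ : 1 - _ / r ^+ 2 = 1 + - (r ^+ 2)^-1 * pb_expect (fun k => (k%:R - c) ^+ 2) a);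
  last by rewrite mulNr mulrC.
rewrite -pb_expect_affine.
apply: ler_pb_expect => // k; apply: le_trans (ramp_step_ge c k r_gt0).
by rewrite expr_div_n; lra.
Qed.

Variables p q : 'I_n -> R.

Lemma Delta_ge0 : 0 <= Delta p q.
Proof. exact: sumr_ge0. Qed.

Hypotheses (p01 : forall i, 0 <= p i <= 1) (q01 : forall i, 0 <= q i <= 1)
  (q_le_p : forall i, q i <= p i).

Lemma Delta_sub : Delta p q = \sum_i p i - \sum_i q i.
Proof. by rewrite /Delta -sumrB; apply: eq_bigr => i _; rewrite ger0_norm // subr_ge0. Qed.

Lemma sigma2_ge0 : 0 <= sigma2 p.
Proof.
by apply: sumr_ge0 => i _; have /andP[p0 p1] := p01 i; rewrite mulr_ge0 ?subr_ge0.
Qed.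

Let c := (\sum_i p i + \sum_i q i - 1) / 2.

Section Hybrid.
Variables (j : 'I_n) (z : 'I_n -> R).
Hypotheses (zj0 : z j = 0) (z_between : forall i, i != j -> q i <= z i <= p i).

Lemma hybrid_in01 i : 0 <= z i <= 1.
Proof.
have [->|i_neq_j] := eqVneq i j; first by rewrite zj0 lexx ler01.
have /andP[qz zp] := z_between i_neq_j; have := p01 i; have := q01 i; lra.
Qed.

Lemma sigma2_hybrid_le : sigma2 z <= sigma2 p + Delta p q.
Proof.
rewrite /sigma2 /Delta -big_split /=; apply: ler_sum => i _.
rewrite ger0_norm ?subr_ge0 ?q_le_p //; have [->|i_neq_j] := eqVneq i j.
  by have /andP[p0 p1] := p01 j; have qp := q_le_p j; rewrite zj0; nra.
have /andP[p0 p1] := p01 i; have /andP[q0 q1] := q01 i.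
by have /andP[qz zp] := z_between i_neq_j; nra.
Qed.

Lemma sum_hybrid_le : \sum_i z i <= \sum_i p i.
Proof.
apply: ler_sum => i _; have [->|i_neq_j] := eqVneq i j; first by rewrite zj0; have := p01 j; lra.
by have /andP[] := z_between i_neq_j.
Qed.

Lemma sum_hybrid_ge : \sum_i q i - 1 <= \sum_i z i.
Proof.
rewrite lerBlDr -lerBlDl -sumrB (bigD1 j) //= zj0 subr0.
rewrite -[1]addr0 lerD //; first by have /andP[] := q01 j.
by apply: sumr_le0 => i i_neq_j; have /andP[qz _] := z_between i_neq_j; rewrite subr_le0.
Qed.

Lemma hybrid_moment_le :
  sigma2 z + (\sum_i z i - c) ^+ 2 <= sigma2 p + Delta p q + ((Delta p q + 1) / 2) ^+ 2.
Proof.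
rewrite lerD ?sigma2_hybrid_le //.
have := sum_hybrid_le; have := sum_hybrid_ge; rewrite /c Delta_sub => ge le; nra.
Qed.

End Hybrid.

Lemma pb_expect_ramp_gap (r : R) : 0 < r ->
  (1 - (sigma2 p + Delta p q + ((Delta p q + 1) / 2) ^+ 2) / r ^+ 2) * Delta p q <=
  pb_expect (ramp r c) p - pb_expect (ramp r c) q.
Proof.
move=> r_gt0; set B := 1 - _ / r ^+ 2; rewrite pb_expect_telescope /Delta mulr_sumr.
apply: ler_sum => j _; rewrite ger0_norm ?subr_ge0 // mulrC ler_wpM2l ?subr_ge0 //.
set z := set_coord (mix p q j) j 0.
have zj0 : z j = 0 by rewrite /z /set_coord eqxx.
have z_between i : i != j -> q i <= z i <= p i.
  move=> /negbTE i_neq_j; rewrite /z /set_coord /mix i_neq_j.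
  by case: ifP => _; rewrite ?q_le_p lexx.
apply: le_trans (pb_expect_ramp_step_ge c (hybrid_in01 zj0 z_between) r_gt0).
rewrite /B lerD2l lerN2; apply: ler_wpM2r; last exact: hybrid_moment_le zj0 z_between.
by rewrite invr_ge0 exprn_ge0 // ltW.
Qed.

Lemma Delta_le_TV :
  Delta p q <= 9 * Num.max (Delta p q) (Num.sqrt (sigma2 p + 1)) * TV_pb p q.
Proof.
set M := Num.max _ _; have M_ge1 : 1 <= M.
  by rewrite le_max sqrtrD1_ge1 ?orbT // sigma2_ge0.
have r_gt0 : 0 < 3 * M by lra.
have moment : sigma2 p + Delta p q + ((Delta p q + 1) / 2) ^+ 2 <= 2 * M ^+ 2.
  exact: moment_le_sqr_max sigma2_ge0 Delta_ge0.
have coef : 7 / 9 <= 1 - (sigma2 p + Delta p q + ((Delta p q + 1) / 2) ^+ 2) / (3 * M) ^+ 2.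
  suff : (sigma2 p + Delta p q + ((Delta p q + 1) / 2) ^+ 2) / (3 * M) ^+ 2 <= 2 / 9 by lra.
  by rewrite ler_pdivrMr ?exprn_gt0 //; lra.
have gap := le_trans (ler_wpM2r Delta_ge0 coef) (pb_expect_ramp_gap r_gt0).
have tv := pb_expect_sub_le_TV p q (fun k => ramp_norm_le c k (ltW r_gt0)).
have TV_ge0 : 0 <= TV_pb p q by rewrite mulr_ge0 ?sumr_ge0 // invr_ge0.
nra.
Qed.

End RampGap.

Theorem theorem2 (R : realType) (n : nat) (p q : 'I_n -> R)
  (hn : (1 <= n)%N)
  (hp : forall i, 0 <= p i <= 1) (hq : forall i, 0 <= q i <= 1)
  (hpq : forall i, q i <= p i) :
  12^-1 * Phi p q <= TV_pb p q.
Proof.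
have D_ge0 := Delta_ge0 p q; have s_ge1 := sqrtrD1_ge1 (sigma2_ge0 hp).
have Phi_le := min1_div_le_div_max D_ge0 (lt_le_trans ltr01 s_ge1).
have Phi_ge0 : 0 <= Phi p q by rewrite le_min ler01 divr_ge0 // (le_trans ler01).
have := Delta_le_TV hp hq hpq; set M := Num.max _ _ => D_le_TV.
have M_gt0 : 0 < M by rewrite lt_max (lt_le_trans ltr01 s_ge1) orbT.
have : Delta p q / M <= 9 * TV_pb p q by rewrite ler_pdivrMr // mulrAC.
rewrite /Phi in Phi_le Phi_ge0 *; lra.
Qed.
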